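(* None of seriality, reflexivity, transitivity, symmetry and Euclidicity is definable in $\mathcal{L}(\boxdot)\cup\mathcal{L}(\boxplus)$. That is, for each such property $P$, there is no set $\Gamma\subseteq\mathcal{L}(\boxdot)\cup\mathcal{L}(\boxplus)$ such that for every bimodal frame $\mathcal{F}$, $\mathcal{F}\vDash\Gamma$ iff $\mathcal{F}$ is $P$.
   Context: Fix a nonempty set $\mathbf{P}$ of propositional variables. A bimodal frame is $\langle S,R_1,R_2\rangle$ with $S$ nonempty and $R_1,R_2\subseteq S\times S$; a bimodal model adds a valuation $V:\mathbf{P}\to\mathcal{P}(S)$. A bimodal frame is $P$ (for $P$ among seriality, reflexivity, transitivity, symmetry, Euclidicity) if both $R_1$ and $R_2$ have $P$. Write $R_i(s)=\{t\mid sR_it\}$. $\mathcal{L}(\boxdot):\ \phi::=p\mid\neg\phi\mid(\phi\wedge\phi)\mid\boxdot\phi$ and $\mathcal{L}(\boxplus):\ \phi::=p\mid\neg\phi\mid(\phi\wedge\phi)\mid\boxplus\phi$. Truth: $\mathcal{M},s\vDash p$ iff $s\in V(p)$; Booleans as usual; $\mathcal{M},s\vDash\boxdot\phi$ iff for all $t,u$ with $sR_1t$ and $sR_2u$, ($\mathcal{M},t\vDash\phi\iff\mathcal{M},u\vDash\phi$); $\mathcal{M},s\vDash\boxplus\phi$ iff ($\mathcal{M},t\vDash\phi$ for all $t\in R_1(s)$) or ($\mathcal{M},u\vDash\neg\phi$ for all $u\in R_2(s)$). $\mathcal{F}\vDash\Gamma$ means every formula of $\Gamma$ is true at every state of every model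 based on $\mathcal{F}$. *)

From Stdlib Require Import Classical.

(* Formulas over variables of type Var, containing both modalities;
   the languages L(boxdot) and L(boxplus) are the sub-languages using
   only one modality. *)
Inductive form (Var : Type) : Type :=
| PVar : Var -> form Var
| Neg : form Var -> form Var
| Conj : form Var -> form Var -> form Var
| BoxDot : form Var -> form Var
| BoxPlus : form Var -> form Var.
Arguments PVar {Var} _.
Arguments Neg {Var} _.
Arguments Conj {Var} _ _.
Arguments BoxDot {Var} _.
Arguments BoxPlus {Var} _.

Fixpoint in_Ldot {Var} (f : form Var) : Prop :=
  match f with
  | PVar _ => True
  | Neg g => in_Ldot g
  | Conj g h => in_Ldot g /\ in_Ldot h
  | BoxDot g => in_Ldot g
  | BoxPlus _ => False
  end.

Fixpoint in_Lplus {Var} (f : form Var) : Prop :=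
  match f with
  | PVar _ => True
  | Neg g => in_Lplus g
  | Conj g h => in_Lplus g /\ in_Lplus h
  | BoxDot _ => False
  | BoxPlus g => in_Lplus g
  end.

Record frame : Type := Frame {
  st : Type;
  st_inhabited : inhabited st;
  R1 : st -> st -> Prop;
  R2 : st -> st -> Prop }.

Fixpoint sat {Var} (F : frame) (V : Var -> st F -> Prop) (s : st F)
    (f : form Var) : Prop :=
  match f with
  | PVar p => V p s
  | Neg g => ~ sat F V s g
  | Conj g h => sat F V s g /\ sat F V s h
  | BoxDot g => forall t u, R1 F s t -> R2 F s u ->
                  (sat F V t g <-> sat F V u g)
  | BoxPlus g => (forall t, R1 F s t -> sat F V t g) \/
                 (forall u, R2 F s u -> ~ sat F V u g)
  end.

Definition frame_valid {Var} (F : frame) (Gamma : form Var -> Prop) : Prop :=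
  forall f, Gamma f -> forall (V : Var -> st F -> Prop) (s : st F), sat F V s f.

Inductive frame_prop : Type := Serial | Refl | Trans | Symm | Eucl.

Definition rel_has (P : frame_prop) {S : Type} (R : S -> S -> Prop) : Prop :=
  match P with
  | Serial => forall s, exists t, R s t
  | Refl => forall s, R s s
  | Trans => forall s t u, R s t -> R t u -> R s u
  | Symm => forall s t, R s t -> R t s
  | Eucl => forall s t u, R s t -> R s u -> R t u
  end.

Definition frame_has (P : frame_prop) (F : frame) : Prop :=
  rel_has P (R1 F) /\ rel_has P (R2 F).

(* Both modalities only look at R1-successors together with R2-successors:
   at a state without R1-successors, boxdot g holds vacuously and boxplus g
   holds through its first disjunct.  At the one-point frame whose relations
   are total, boxdot g holds because R1(s) = R2(s) = {s}, and boxplus g holds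
   by excluded middle.  Hence on a frame with empty R1 every formula (of the
   full bimodal language, not only of the two fragments) has at a state s the
   same truth value as in the one-point frame under the valuation read off at
   s.  So any Gamma valid on the one-point frame -- which has all five
   properties -- is valid on every frame with empty R1.  A single frame with
   empty R1 and R2 the successor relation on nat lacks all five properties,
   so no Gamma can define any of them. *)
From Stdlib Require Import Classical.

Definition point_frame : frame :=
  Frame unit (inhabits tt) (fun _ _ => True) (fun _ _ => True).

Lemma point_frame_has (P : frame_prop) : frame_has P point_frame.
Proof. destruct P; split; simpl; intros; try exists tt; exact I. Qed.

Definition successor_frame : frame :=
  Frame nat (inhabits 0) (fun _ _ => False) (fun a b => b = S a).

Lemma successor_frame_lacks (P : frame_prop) : ~ frame_has P successor_frame.
Proof.
  intros [HR1 HR2]; destruct P; simpl in HR1, HR2.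
  - destruct (HR1 0) as [t []].
  - exact (HR1 0).
  - discriminate (HR2 0 1 2 eq_refl eq_refl).
  - discriminate (HR2 0 1 eq_refl).
  - discriminate (HR2 0 1 1 eq_refl eq_refl).
Qed.

Section Collapse.

Variable Var : Type.

Lemma boxes_hold_without_R1 (F : frame) (V : Var -> st F -> Prop) (s : st F)
    (g : form Var) :
  (forall t, ~ R1 F s t) -> sat F V s (BoxDot g) /\ sat F V s (BoxPlus g).
Proof.
  intros HR1; split; simpl.
  - intros t u Ht; destruct (HR1 t Ht).
  - left; intros t Ht; destruct (HR1 t Ht).
Qed.

(* In the one-point frame both modal formulas hold as well; for boxplus this
   is excluded middle on the truth of g at the unique state. *)
Lemma boxes_hold_at_point (V : Var -> unit -> Prop) (g : form Var) :
  sat point_frame V tt (BoxDot g) /\ sat point_frame V tt (BoxPlus g).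
Proof.
  split; simpl.
  - intros [] [] _ _; tauto.
  - destruct (classic (sat point_frame V tt g)) as [Hg | Hg].
    + left; intros []; auto.
    + right; intros []; auto.
Qed.

Lemma sat_collapse_to_point (F : frame) (HR1 : forall a b, ~ R1 F a b)
    (V : Var -> st F -> Prop) (s : st F) (f : form Var) :
  sat F V s f <-> sat point_frame (fun p _ => V p s) tt f.
Proof.
  induction f as [p | g IHg | g IHg h IHh | g _ | g _].
  - reflexivity.
  - simpl; rewrite IHg; reflexivity.
  - simpl; rewrite IHg, IHh; reflexivity.
  - pose proof (boxes_hold_without_R1 F V s g (HR1 s)).
    pose proof (boxes_hold_at_point (fun p _ => V p s) g); tauto.
  - pose proof (boxes_hold_without_R1 F V s g (HR1 s)).
    pose proof (boxes_hold_at_point (fun p _ => V p s) g); tauto.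
Qed.

Lemma valid_without_R1 (Gamma : form Var -> Prop) (F : frame) :
  (forall a b, ~ R1 F a b) -> frame_valid point_frame Gamma ->
  frame_valid F Gamma.
Proof.
  intros HR1 Hpoint f Hf V s.
  apply (sat_collapse_to_point F HR1), Hpoint, Hf.
Qed.

End Collapse.

Theorem proposition5p3 (Var : Type) (p0 : Var) (P : frame_prop) :
  ~ exists Gamma : form Var -> Prop,
      (forall f, Gamma f -> in_Ldot f \/ in_Lplus f) /\
      (forall F : frame, frame_valid F Gamma <-> frame_has P F).
Proof.
  intros [Gamma [_ Hdefines]].
  apply (successor_frame_lacks P), Hdefines.
  apply valid_without_R1.
  - intros a b Hab; exact Hab.
  - apply Hdefines, point_frame_has.
Qed.
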